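(* Write $Q:=3^\ell$ with $\ell\ge 5$. Let $n_1,n_2,n_5,n_9$ be nonnegative integers for which $n_1+2n_2+5n_5+9n_9=Q-1$ and the union of the base-$3$ expansions of the $n_j$'s consists of one copy of each $3^i$ with $0\le i\le \ell-2$ and $i\ne 2$, along with either one copy of $2\cdot 9$ or two copies of $9$. Then the base-$3$ expansion of $n_5$ contains $Q/9$, and if $\ell\ge 6$ then the base-$3$ expansion of $n_9$ contains $Q/27$.
   Context: A term of the base-$p$ expansion of a nonnegative integer $m=\sum_j b_jp^j$ (with $0\le b_j\le p-1$) is some $b_jp^j$ with $b_j>0$. The union of the base-$p$ expansions of several integers means the multiset of all terms of all these integers. *)

From mathcomp Require Import all_boot.
Set Implicit Arguments. Unset Strict Implicit. Unset Printing Implicit Defensive.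

Definition digit (p m j : nat) : nat := (m %/ p ^ j) %% p.

(* The terms of the base-p expansion of m: the values b_j * p^j with b_j > 0.
   Positions j range over 0..m, which covers all nonzero digits (p^j > m
   for j > m when p >= 2). *)
Definition base_terms (p m : nat) : seq nat :=
  [seq digit p m j * p ^ j | j <- iota 0 m.+1 & digit p m j != 0].

Definition terms_union (p : nat) (ms : seq nat) : seq nat :=
  flatten [seq base_terms p m | m <- ms].

(* Put c_i = d_i(n1) + 2 d_i(n2) + 5 d_i(n5) + 9 d_i(n9), where d_i is the i-th ternary digit.
   The multiset hypothesis says that in every column i < l - 1 other than i = 2 exactly one of
   the four digits is 1 and the others vanish, so c_i is 1, 2, 5 or 9, while c_2 <= 18; and
   sum_i c_i 3^i = 3^l - 1.  Adding 1 to this sum column by column gives carries m_i with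
   m_0 = 1, m_i + c_i = 3 m_(i+1) and m_(l-1) = 3.  A carry 1 or 2 stays 1 or 2 (then
   m_i + c_i <= 11 and m_i + c_i <> 9), so m_3 <= (2 + 18) / 3, and afterwards every carry is at
   most (6 + 9) / 3.  At the top, m_(l-2) + c_(l-2) = 9 with 1 <= m_(l-2) <= 6 forces
   c_(l-2) = 5 and m_(l-2) = 4; one column lower m_(l-3) + c_(l-3) = 12 forces c_(l-3) = 9.
   Finally c_i = 5 (resp. 9) means that the digit of n5 (resp. n9) in column i is 1. *)

From mathcomp Require Import all_boot zify.

Set Implicit Arguments.
Unset Strict Implicit.
Unset Printing Implicit Defensive.

Lemma digit_lt p n i : 0 < p -> digit p n i < p.
Proof. exact: ltn_pmod. Qed.

Lemma digit_small p n i : n < p ^ i -> digit p n i = 0.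
Proof. by move=> lt_n; rewrite /digit divn_small ?mod0n. Qed.

Lemma digitS p n i : digit p n i.+1 = digit p (n %/ p) i.
Proof. by rewrite /digit expnS divnMA. Qed.

Lemma digit_expansion_lt p N n :
  n < p ^ N -> n = \sum_(0 <= i < N) digit p n i * p ^ i.
Proof.
elim: N n => [|N IH] n lt_n; first by rewrite big_geq //; case: n lt_n.
have p_gt0 : 0 < p by move: lt_n; case: (posnP p) => [->|//]; rewrite exp0n.
rewrite big_nat_recl //.
under eq_bigr => i _ do rewrite digitS expnS mulnCA.
rewrite -big_distrr /= -IH; last by rewrite ltn_divLR // -expnSr.
by rewrite /digit expn0 divn1 muln1 {1}(divn_eq n p) addnC mulnC.
Qed.

Lemma digit_expansion p N n : 1 < p ->
  (forall i, N <= i -> digit p n i = 0) ->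
  n = \sum_(0 <= i < N) digit p n i * p ^ i.
Proof.
move=> p_gt1 high_digits.
have lt_n : n < p ^ (n + N).
  by apply: leq_trans (ltn_expl n p_gt1) _; rewrite leq_pexp2l ?leq_addr // ltnW.
rewrite {1}(digit_expansion_lt lt_n) (big_cat_nat (n := N)) ?leq_addl //=.
rewrite [X in _ + X]big1_seq ?addn0 // => i /andP[_].
by rewrite mem_index_iota => /andP[/high_digits-> _].
Qed.

Lemma trunc_log_digit_term p d i : 0 < d < p -> trunc_log p (d * p ^ i) = i.
Proof.
case/andP=> d_gt0 lt_dp; apply: trunc_log_eq; first exact: leq_ltn_trans lt_dp.
by rewrite leq_pmull //= expnSr mulnC ltn_pmul2l // expn_gt0 (ltn_trans d_gt0).
Qed.

Lemma eq_digit_terms p a b i j : 0 < a < p -> 0 < b < p ->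
  (a * p ^ i == b * p ^ j) = (a == b) && (i == j).
Proof.
move=> a_digit b_digit; apply/eqP/andP => [eq_ab | [/eqP-> /eqP->] //].
have eq_ij : i = j by rewrite -(trunc_log_digit_term i a_digit) eq_ab trunc_log_digit_term.
move: eq_ab; rewrite eq_ij => /eqP; rewrite eqn_pmul2r ?expn_gt0; last by case/andP: a_digit; lia.
by move=> ->.
Qed.

Lemma count_base_terms p n d i : 0 < d < p ->
  count_mem (d * p ^ i) (base_terms p n) = (digit p n i == d).
Proof.
move=> d_digit; have /andP[d_gt0 lt_dp] := d_digit.
rewrite /base_terms count_map count_filter.
rewrite (eq_count (a2 := fun j => (digit p n i == d) && (j == i))) => [|j /=].
  case: eqP => [digit_i|_]; last by rewrite count_pred0.
  have le_pi_n : p ^ i <= n by rewrite leqNgt; apply/negP => /digit_small; lia.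
  rewrite -[count _ _]/(count_mem i (iota 0 n.+1)) count_uniq_mem ?iota_uniq //.
  rewrite mem_iota add0n ltnS /=.
  by rewrite (leq_trans _ le_pi_n) // ltnW // ltn_expl // (leq_ltn_trans d_gt0).
have [digit_j0|digit_j_gt0] := posnP (digit p n j).
  rewrite digit_j0 andbF; apply/esym/andP => -[/eqP digit_i /eqP eq_ji].
  by move: digit_i; rewrite -eq_ji digit_j0; lia.
rewrite andbT eq_digit_terms //; last by rewrite digit_j_gt0 digit_lt // (ltn_trans d_gt0).
by case: (eqVneq j i) => [->|]; rewrite ?andbF.
Qed.

Lemma mem_base_terms p n d i : 0 < d < p ->
  (d * p ^ i \in base_terms p n) = (digit p n i == d).
Proof. by move=> d_digit; rewrite -has_pred1 has_count count_base_terms // lt0b. Qed.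

Lemma digit_indicator_sum p n i : 0 < p ->
  digit p n i = \sum_(d < p) d * (digit p n i == d).
Proof.
move=> p_gt0; rewrite (bigD1 (Ordinal (digit_lt n i p_gt0))) //= eqxx muln1.
rewrite big1 ?addn0 // => d; rewrite -val_eqE /= eq_sym => /negbTE->.
by rewrite muln0.
Qed.

Lemma sum_digits_terms_union p ms i : 0 < p ->
  \sum_(m <- ms) digit p m i
    = \sum_(d < p) d * count_mem (d * p ^ i) (terms_union p ms).
Proof.
move=> p_gt0; under eq_bigr => m _ do rewrite (digit_indicator_sum _ _ p_gt0).
rewrite exchange_big; apply: eq_bigr => d _ /=; rewrite -big_distrr /=.
have [->|d_gt0] := posnP d; first by rewrite !mul0n.
rewrite /terms_union count_flatten sumnE !big_map; congr (_ * _).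
by apply: eq_bigr => m _; rewrite count_base_terms // d_gt0 ltn_ord.
Qed.

Lemma count_powers_except p d i j N : 1 < p -> 0 < d < p ->
  count_mem (d * p ^ i) [seq p ^ k | k <- iota 0 N & k != j]
    = [&& d == 1, i < N & i != j].
Proof.
move=> p_gt1 d_digit; rewrite count_map count_filter.
rewrite (eq_count (a2 := fun k => [&& d == 1, i != j & k == i])) => [|k /=]; last first.
  rewrite -[p ^ k]mul1n eq_digit_terms // eq_sym.
  by case: (eqVneq k i) => [->|]; rewrite ?andbF ?andbT.
case: (d == 1); case: (i != j); rewrite ?andbF ?count_pred0 //= andbT.
by rewrite -[count _ _]/(count_mem i (iota 0 N)) count_uniq_mem ?iota_uniq // mem_iota.
Qed.

Lemma sum_ternary_digits_terms_union ms i :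
  \sum_(m <- ms) digit 3 m i
    = count_mem (3 ^ i) (terms_union 3 ms) + 2 * count_mem (2 * 3 ^ i) (terms_union 3 ms).
Proof.
by rewrite sum_digits_terms_union // !big_ord_recl big_ord0 /= /bump /= !addn0 !mul0n add0n !mul1n.
Qed.

Lemma column_digit_sum l n1 n2 n5 n9 :
  (perm_eq (terms_union 3 [:: n1; n2; n5; n9])
           ([seq 3 ^ i | i <- iota 0 (l - 1) & i != 2] ++ [:: 2 * 9])
   \/
   perm_eq (terms_union 3 [:: n1; n2; n5; n9])
           ([seq 3 ^ i | i <- iota 0 (l - 1) & i != 2] ++ [:: 9; 9])) ->
  forall i, digit 3 n1 i + digit 3 n2 i + digit 3 n5 i + digit 3 n9 i
              = ((i < l - 1) && (i != 2)) + 2 * (i == 2).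
Proof.
move=> perm_terms i.
have := sum_ternary_digits_terms_union [:: n1; n2; n5; n9] i.
rewrite !big_cons big_nil addn0 !addnA => ->.
have ones := @count_powers_except 3 1 i 2 (l - 1) isT isT; rewrite mul1n in ones.
have twos := @count_powers_except 3 2 i 2 (l - 1) isT isT.
have term_eq a b : 0 < a < 3 -> 0 < b < 3 -> (a * 3 ^ 2 == b * 3 ^ i) = (a == b) && (i == 2).
  by move=> a_digit b_digit; rewrite eq_digit_terms // [2 == i]eq_sym.
have eighteen_one : (2 * 9 == 3 ^ i) = false by rewrite -[3 ^ i]mul1n (term_eq 2 1).
have eighteen_two : (2 * 9 == 2 * 3 ^ i) = (i == 2) by rewrite (term_eq 2 2).
have nine_one : (9 == 3 ^ i) = (i == 2) by rewrite -[9]/(1 * 3 ^ 2) -[3 ^ i]mul1n term_eq.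
have nine_two : (9 == 2 * 3 ^ i) = false by rewrite -[9]/(1 * 3 ^ 2) term_eq.
case: perm_terms => /permP count_eq; rewrite !count_eq !count_cat ones twos /=.
- by rewrite eighteen_one eighteen_two; lia.
- by rewrite nine_one nine_two; lia.
Qed.

Section Carries.

Variables (p : nat) (c : nat -> nat).

Definition partial_sum k := \sum_(0 <= i < k) c i * p ^ i.

(* The carry into column [k] when 1 is added to [\sum_i c i * p ^ i] column by column. *)
Definition carry k := (partial_sum k).+1 %/ p ^ k.

Lemma carry0 : carry 0 = 1.
Proof. by rewrite /carry /partial_sum big_geq // expn0 divn1. Qed.

Variable L : nat.
Hypothesis p_gt0 : 0 < p.
Hypothesis dvd_partial_sum_L : p ^ L %| (partial_sum L).+1.

Lemma dvd_partial_sum k : k <= L -> p ^ k %| (partial_sum k).+1.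
Proof.
move=> le_kL; have := dvdn_trans (dvdn_exp2l p le_kL) dvd_partial_sum_L.
rewrite /partial_sum (big_cat_nat (n := k)) //= -addSn dvdn_addl //.
rewrite big_seq; apply: dvdn_sum => i; rewrite mem_index_iota => /andP[le_ki _].
exact: dvdn_mull (dvdn_exp2l p le_ki).
Qed.

Lemma partial_sumE k : k <= L -> (partial_sum k).+1 = carry k * p ^ k.
Proof. by move=> le_kL; rewrite divnK // dvd_partial_sum. Qed.

Lemma carry_gt0 k : k <= L -> 0 < carry k.
Proof. by move=> /partial_sumE; case: (carry k). Qed.

Lemma carryS k : k < L -> carry k + c k = p * carry k.+1.
Proof.
move=> lt_kL; apply/eqP; rewrite -(eqn_pmul2r (m := p ^ k)) ?expn_gt0 ?p_gt0 //.
rewrite mulnDl [X in _ == X]mulnAC -expnS [X in _ == X]mulnC.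
by rewrite -!partial_sumE ?(ltnW lt_kL) // /partial_sum big_nat_recr.
Qed.

End Carries.

Section ColumnWeights.

Variables l n1 n2 n5 n9 : nat.
Hypothesis l_ge5 : 5 <= l.
Hypothesis weighted_sum : n1 + 2 * n2 + 5 * n5 + 9 * n9 = 3 ^ l - 1.
Hypothesis column_sum : forall i,
  digit 3 n1 i + digit 3 n2 i + digit 3 n5 i + digit 3 n9 i
    = ((i < l - 1) && (i != 2)) + 2 * (i == 2).

Definition column_weight i :=
  digit 3 n1 i + 2 * digit 3 n2 i + 5 * digit 3 n5 i + 9 * digit 3 n9 i.

Local Notation carry_w := (carry 3 column_weight).

Lemma column_sum_one i : i < l - 1 -> i != 2 ->
  digit 3 n1 i + digit 3 n2 i + digit 3 n5 i + digit 3 n9 i = 1.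
Proof. by move=> lt_il ne_i2; rewrite column_sum lt_il ne_i2 (negbTE ne_i2). Qed.

Lemma column_weight_cases i : i < l - 1 -> i != 2 ->
  column_weight i = 1 \/ column_weight i = 2 \/ column_weight i = 5 \/ column_weight i = 9.
Proof. by move=> lt_il ne_i2; have := column_sum_one lt_il ne_i2; rewrite /column_weight; lia. Qed.

Lemma column_weight2_le : column_weight 2 <= 18.
Proof. by have := column_sum 2; rewrite andbF /column_weight; lia. Qed.

Lemma digit_n5_of_weight5 i : i < l - 1 -> i != 2 ->
  column_weight i = 5 -> digit 3 n5 i = 1.
Proof. by move=> lt_il ne_i2; have := column_sum_one lt_il ne_i2; rewrite /column_weight; lia. Qed.

Lemma digit_n9_of_weight9 i : i < l - 1 -> i != 2 ->
  column_weight i = 9 -> digit 3 n9 i = 1.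
Proof. by move=> lt_il ne_i2; have := column_sum_one lt_il ne_i2; rewrite /column_weight; lia. Qed.

Lemma partial_sum_column_weight : partial_sum 3 column_weight (l - 1) = 3 ^ l - 1.
Proof.
have high_digits i : l - 1 <= i ->
    [/\ digit 3 n1 i = 0, digit 3 n2 i = 0, digit 3 n5 i = 0 & digit 3 n9 i = 0].
  move=> le_li; have := column_sum i.
  rewrite ltnNge le_li (_ : (i == 2) = false) /=; last by apply/eqP; lia.
  by move=> digits0; split; lia.
rewrite -weighted_sum.
rewrite {1}(@digit_expansion 3 (l - 1) n1) //; last by move=> i /high_digits[].
rewrite {1}(@digit_expansion 3 (l - 1) n2) //; last by move=> i /high_digits[].
rewrite {1}(@digit_expansion 3 (l - 1) n5) //; last by move=> i /high_digits[].
rewrite {1}(@digit_expansion 3 (l - 1) n9) //; last by move=> i /high_digits[].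
rewrite !big_distrr -!big_split; apply: eq_bigr => i _.
by rewrite /column_weight 3!mulnDl -!mulnA.
Qed.

Lemma partial_sum_column_weight_succ :
  (partial_sum 3 column_weight (l - 1)).+1 = 3 * 3 ^ (l - 1).
Proof.
rewrite partial_sum_column_weight -expnS (_ : (l - 1).+1 = l); last lia.
have : 0 < 3 ^ l by rewrite expn_gt0.
lia.
Qed.

Lemma dvd_partial_sum_column_weight :
  3 ^ (l - 1) %| (partial_sum 3 column_weight (l - 1)).+1.
Proof. by rewrite partial_sum_column_weight_succ dvdn_mull. Qed.

Lemma carry_column_weight_top : carry_w (l - 1) = 3.
Proof. by rewrite /carry partial_sum_column_weight_succ mulnK ?expn_gt0. Qed.

Lemma carry_column_weightS k : k < l - 1 ->
  carry_w k + column_weight k = 3 * carry_w k.+1.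
Proof. exact/carryS/dvd_partial_sum_column_weight. Qed.

Lemma carry_column_weight_gt0 k : k <= l - 1 -> 0 < carry_w k.
Proof. exact/carry_gt0/dvd_partial_sum_column_weight. Qed.

Lemma carry_column_weight_le2 k : k <= 2 -> carry_w k <= 2.
Proof.
elim: k => [|k IH] le_k2; first by rewrite carry0.
have [lt_kl ne_k2] : k < l - 1 /\ k != 2 by lia.
have := carry_column_weightS lt_kl; have := carry_column_weight_gt0 (ltnW lt_kl).
by have := column_weight_cases lt_kl ne_k2; have := IH (ltnW le_k2); lia.
Qed.

Lemma carry_column_weight_le6 k : k <= l - 1 -> carry_w k <= 6.
Proof.
elim: k => [|k IH] le_kl; first by rewrite carry0.
have lt_kl : k < l - 1 by lia.
have := carry_column_weightS lt_kl.
case: (eqVneq k 2) => [->|ne_k2].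
  by have := carry_column_weight_le2 (leqnn 2); have := column_weight2_le; lia.
by have := column_weight_cases lt_kl ne_k2; have := IH (ltnW le_kl); lia.
Qed.

Lemma column_weight_second_top : column_weight (l - 2) = 5 /\ carry_w (l - 2) = 4.
Proof.
have [lt_l2 ne_l2] : l - 2 < l - 1 /\ l - 2 != 2 by lia.
have := carry_column_weightS lt_l2; rewrite (_ : (l - 2).+1 = l - 1); last lia.
rewrite carry_column_weight_top.
have := carry_column_weight_gt0 (ltnW lt_l2); have := carry_column_weight_le6 (ltnW lt_l2).
by have := column_weight_cases lt_l2 ne_l2; lia.
Qed.

Lemma column_weight_third_top : 6 <= l -> column_weight (l - 3) = 9.
Proof.
move=> l_ge6; have [lt_l3 ne_l3] : l - 3 < l - 1 /\ l - 3 != 2 by lia.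
have := carry_column_weightS lt_l3; rewrite (_ : (l - 3).+1 = l - 2); last lia.
have [_ ->] := column_weight_second_top.
have := carry_column_weight_le6 (ltnW lt_l3).
by have := column_weight_cases lt_l3 ne_l3; lia.
Qed.

Lemma digit_n5_second_top : digit 3 n5 (l - 2) = 1.
Proof.
apply: digit_n5_of_weight5; [lia | lia | exact: column_weight_second_top.1].
Qed.

Lemma digit_n9_third_top : 6 <= l -> digit 3 n9 (l - 3) = 1.
Proof.
move=> l_ge6; apply: digit_n9_of_weight9; [lia | lia | exact: column_weight_third_top].
Qed.

End ColumnWeights.

Theorem lemma4p2 (l n1 n2 n5 n9 : nat) :
  5 <= l ->
  n1 + 2 * n2 + 5 * n5 + 9 * n9 = 3 ^ l - 1 ->
  (perm_eq (terms_union 3 [:: n1; n2; n5; n9])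
           ([seq 3 ^ i | i <- iota 0 (l - 1) & i != 2] ++ [:: 2 * 9])
   \/
   perm_eq (terms_union 3 [:: n1; n2; n5; n9])
           ([seq 3 ^ i | i <- iota 0 (l - 1) & i != 2] ++ [:: 9; 9])) ->
  (3 ^ l %/ 9 \in base_terms 3 n5) /\
  (6 <= l -> 3 ^ l %/ 27 \in base_terms 3 n9).
Proof.
move=> l_ge5 weighted_sum perm_terms.
have column_sum := column_digit_sum perm_terms.
have top_power k : k <= l -> 3 ^ l %/ 3 ^ k = 1 * 3 ^ (l - k).
  by move=> le_kl; rewrite mul1n expnB.
split => [|l_ge6].
- rewrite -[9]/(3 ^ 2) top_power ?mem_base_terms //; last lia.
  by rewrite (digit_n5_second_top l_ge5 weighted_sum column_sum).
- rewrite -[27]/(3 ^ 3) top_power ?mem_base_terms //; last lia.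
  by rewrite (digit_n9_third_top l_ge5 weighted_sum column_sum).
Qed.
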